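(* Let $P$ be an $\alpha$-proper distribution and $\theta^P$ as defined below. For any $y\in\mathcal{B}$, let $y^*$ be a minimizer of $\|\xi-y\|^2_{2,\theta^P}$ over $\xi\in\Xi$. Then $$\|Ay-Ay^*\|_2^2\ge\frac{2}{N\|\theta^P\|_{1,\infty}}\|y-y^*\|^2_{2,\theta^P}.$$
   Context: Let $N,R$ be positive integers; $F_r:2^{[N]}\to\mathbb{R}$ ($r\in[R]$) are submodular with $F_r(\emptyset)=0$, with base polytopes $\mathcal{B}_r=\{u\in\mathbb{R}^N:\sum_{i\in S}u_i\le F_r(S)\ \forall S,\ \sum_{i\in[N]}u_i=F_r([N])\}$ and Lovász extensions $f_r(x)=\max_{u\in\mathcal{B}_r}\langle u,x\rangle$; $\mathcal{B}=\mathcal{B}_1\times\cdots\times\mathcal{B}_R\subseteq(\mathbb{R}^N)^R$; $A:(\mathbb{R}^N)^R\to\mathbb{R}^N$, $Ay=\sum_ry_r$. Element $i$ is incident to $F_r$ if $F_r(S\cup\{i\})\ne F_r(S)$ for some $S\subseteq[N]\setminus\{i\}$; $S_r$ is the set of elements incident to $F_r$; assume every $i$ lies in some $S_r$. For $C\subseteq[R]$, $\mu^C_i=|\{r\in C:i\in S_r\}|$. A distribution $P$ on subsets $C\subseteq[R]$ is $\alpha$-proper ($\alpha\in(0,1)$) if $\mathbb{P}_{C\sim P}(r\in C)=\alpha$ for every $r\in[R]$; then $\theta^P=(\theta^P_1,\dots,\theta^P_R)$ with $\theta^P_r=\mathbb{E}_{C\sim P}[\mu^C\mid r\in C]\in\mathbb{R}^N$.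 For $\theta\in(\mathbb{R}^N_{\ge0})^R$, $\|y\|_{2,\theta}=\sqrt{\sum_r\sum_i\theta_{r,i}y_{r,i}^2}$ and $\|\theta\|_{1,\infty}=\sum_{i\in[N]}\max_{r:\,i\in S_r}\theta_{r,i}$. $x^*$ is the unique minimizer of $\sum_rf_r(x)+\frac12\|x\|_2^2$ and $\Xi=\{\xi\in\mathcal{B}:A\xi=-x^*\}$, the set of minimizers of $\|Ay\|_2^2$ over $\mathcal{B}$. *)

From HB Require Import structures.
From mathcomp Require Import all_boot all_order all_algebra.
Set Implicit Arguments. Unset Strict Implicit. Unset Printing Implicit Defensive.
Import Order.TTheory GRing.Theory Num.Theory.
Local Open Scope ring_scope.

(* vectors of R^N are functions 'I_N -> R; elements of (R^N)^R are
   functions 'I_Rn -> 'I_N -> R. *)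

Definition submodular (R : realFieldType) (N : nat) (F : {set 'I_N} -> R) :=
  forall A B : {set 'I_N}, F (A :|: B) + F (A :&: B) <= F A + F B.

Definition in_base (R : realFieldType) (N : nat) (F : {set 'I_N} -> R)
    (u : 'I_N -> R) : Prop :=
  (forall S : {set 'I_N}, \sum_(i in S) u i <= F S) /\
  \sum_(i < N) u i = F setT.

Definition in_Bprod (R : realFieldType) (N Rn : nat)
    (F : 'I_Rn -> {set 'I_N} -> R) (y : 'I_Rn -> 'I_N -> R) : Prop :=
  forall r, in_base (F r) (y r).

Definition dotv (R : realFieldType) (N : nat) (u x : 'I_N -> R) : R :=
  \sum_(i < N) u i * x i.

Definition sqnorm (R : realFieldType) (N : nat) (x : 'I_N -> R) : R :=
  \sum_(i < N) x i ^+ 2.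

Definition lovasz_val (R : realFieldType) (N : nat) (F : {set 'I_N} -> R)
    (x : 'I_N -> R) (v : R) : Prop :=
  (exists2 u, in_base F u & dotv u x = v) /\
  (forall u, in_base F u -> dotv u x <= v).

Definition Aop (R : realFieldType) (N Rn : nat) (y : 'I_Rn -> 'I_N -> R)
  : 'I_N -> R := fun i => \sum_(r < Rn) y r i.

Definition incident (R : realFieldType) (N : nat) (F : {set 'I_N} -> R)
    (i : 'I_N) : bool :=
  [exists S : {set 'I_N}, (i \notin S) && (F (i |: S) != F S)].

Definition mu (R : realFieldType) (N Rn : nat) (F : 'I_Rn -> {set 'I_N} -> R)
    (C : {set 'I_Rn}) (i : 'I_N) : R :=
  (#|[set r in C | incident (F r) i]|)%:R.

Definition distribution (R : realFieldType) (Rn : nat)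
    (P : {set 'I_Rn} -> R) : Prop :=
  (forall C, 0 <= P C) /\ \sum_(C : {set 'I_Rn}) P C = 1.

Definition proper_dist (R : realFieldType) (Rn : nat) (alpha : R)
    (P : {set 'I_Rn} -> R) : Prop :=
  distribution P /\ 0 < alpha < 1 /\
  forall r : 'I_Rn, \sum_(C : {set 'I_Rn} | r \in C) P C = alpha.

(* theta^P_r = E_{C~P}[ mu^C | r in C ] = (sum_{C ∋ r} P C mu^C) / P(r in C) *)
Definition thetaP (R : realFieldType) (N Rn : nat)
    (F : 'I_Rn -> {set 'I_N} -> R) (P : {set 'I_Rn} -> R)
    (r : 'I_Rn) (i : 'I_N) : R :=
  (\sum_(C : {set 'I_Rn} | r \in C) P C * mu F C i)
  / (\sum_(C : {set 'I_Rn} | r \in C) P C).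

Definition sqnorm_theta (R : realFieldType) (N Rn : nat)
    (theta y : 'I_Rn -> 'I_N -> R) : R :=
  \sum_(r < Rn) \sum_(i < N) theta r i * y r i ^+ 2.

(* ||theta||_{1,inf} = sum_i max_{r : i in S_r} theta_{r,i}  (theta >= 0,
   and the max ranges over a nonempty set, so 0 is a harmless neutral) *)
Definition norm1inf (R : realFieldType) (N Rn : nat)
    (F : 'I_Rn -> {set 'I_N} -> R) (theta : 'I_Rn -> 'I_N -> R) : R :=
  \sum_(i < N)
    \big[Num.max/0]_(r < Rn | incident (F r) i) theta r i.

(* Write [u] for [y*] and [g_r = theta_r (y_r - u_r)].  Call [(l, k)] exchangeable
   for block [r] when [u_r] may be raised at [l] and lowered at [k] inside [B_r].
   Along a closed walk of such exchanges [u] can be moved inside [Xi], so the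
   minimality of [u] forces every closed walk to have nonpositive gain
   [sum (g_r l - g_r k)].  Longest walks then give a potential [q >= 0] making
   [g_r + q] monotone along exchangeable pairs; all its upper level sets are tight
   for [u_r], whence [<g_r + q, y_r - u_r> <= 0].  Summing over [r] gives
   [||y - u||^2_theta <= - <q, A y - A u>].  A longest walk may be taken simple,
   so [q] is bounded by the spreads of [g] at the nodes, and two applications of
   Cauchy-Schwarz give the claim. *)

From HB Require Import structures.
From mathcomp Require Import all_boot all_order all_algebra.
From mathcomp Require Import ring lra.
From Stdlib Require Import FunctionalExtensionality.
Import Order.TTheory GRing.Theory Num.Theory.
Local Open Scope ring_scope.
Set Implicit Arguments. Unset Strict Implicit. Unset Printing Implicit Defensive.

Lemma bigmax_id_or_attained (R : realDomainType) (I : finType) (P : pred I)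
    (f : I -> R) x0 :
  \big[Num.max/x0]_(i | P i) f i = x0 \/
  exists2 i, P i & \big[Num.max/x0]_(i | P i) f i = f i.
Proof.
apply: (big_ind (fun z => z = x0 \/ exists2 i, P i & z = f i)) => //; first by left.
  by move=> a b ha hb; case: (leP a b) => _.
by move=> i hi; right; exists i.
Qed.

Lemma level_sum_le0 (R : realDomainType) (I : finType) (c w : I -> R) :
  \sum_i w i = 0 -> (forall t, \sum_(i | t <= c i) w i <= 0) ->
  \sum_i c i * w i <= 0.
Proof.
move=> w0; have [m hm] : {m | forall i, m <= c i}.
  by exists (\big[Num.min/0]_i c i) => i; exact: bigmin_le.
have: (#|[set i | (m < c i)%R]| <= #|I|)%N by exact: max_card.
move: #|I| => n; elim: n m c hm => [|n IH] m c hm hn hlev.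
  suff ->: \sum_i c i * w i = m * \sum_i w i by rewrite w0 mulr0.
  rewrite mulr_sumr; apply: eq_bigr => i _; congr (_ * _); apply/eqP.
  rewrite eq_le hm andbT leNgt; apply/negP => hi.
  by move: hn; rewrite leqn0 cards_eq0 => /eqP/setP/(_ i); rewrite !inE hi.
case: (set_0Vmem [set i | m < c i]) => [U0|[j0 hj0]].
  by apply: (IH m) => //; rewrite U0 cards0.
move: hj0; rewrite inE => hj0.
case: (@arg_minP _ _ _ j0 [pred i | m < c i] c hj0) => j /= hmj hjmin.
pose c' i := Num.max (c i) (c j).
have cm i : c i < c j -> c i = m.
  move=> hij; apply/eqP; rewrite eq_le hm andbT leNgt; apply/negP => hi.
  by have := hjmin i hi; rewrite leNgt hij.
(* Lifting the minimal values [m] of [c] to the next value [c j] can only increase the sum. *)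
have split : \sum_i c i * w i = \sum_i c' i * w i
    + (c j - m) * \sum_(i | c j <= c i) w i - (c j - m) * \sum_i w i.
  rewrite !mulr_sumr (big_mkcond (fun i => c j <= c i)) -big_split -sumrB /=.
  apply: eq_bigr => i _.
  by rewrite /c'; case: leP => h; [ring | rewrite cm //; ring].
have hc' : \sum_i c' i * w i <= 0.
  apply: (IH (c j)) => [i||t].
  - by rewrite le_max lexx orbT.
  - suff hsub: [set i | c j < c' i] \proper [set i | m < c i].
      by rewrite -ltnS (leq_trans (proper_card hsub)).
    apply/properP; split; last by exists j; rewrite !inE /c' // maxxx ltxx.
    by apply/subsetP => i; rewrite !inE /c' lt_max ltxx orbF; apply: lt_trans.
  - case: (leP t (c j)) => htj.
      by rewrite (eq_bigl xpredT) ?w0 // => i; rewrite le_max htj orbT.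
    rewrite (eq_bigl (fun i => t <= c i)) ?hlev // => i.
    by rewrite le_max [t <= c j]leNgt htj orbF.
rewrite split w0 mulr0 subr0; have := hlev (c j); nra.
Qed.

Lemma sum_mul_delta (R : pzRingType) (I : finType) (P : pred I) (f : I -> R) l :
  \sum_(i | P i) f i * (i == l)%:R = if P l then f l else 0.
Proof.
rewrite big_mkcond (bigD1 l) //= eqxx mulr1 big1 ?addr0 // => i /negPf ->.
by case: (P i); rewrite ?mulr0.
Qed.

Lemma sum_delta (R : pzRingType) (I : finType) (P : pred I) l :
  \sum_(i | P i) ((i == l)%:R : R) = (P l)%:R.
Proof.
by rewrite -(eq_bigr _ (fun i _ => mul1r ((i == l)%:R))) sum_mul_delta; case: (P l).
Qed.

Lemma slope_le0_of_local_min (R : realFieldType) (G K eps : R) :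
  0 < eps -> 0 <= K -> (forall e, 0 < e <= eps -> 2 * G <= e * K) -> G <= 0.
Proof.
move=> heps hK hmin; rewrite leNgt; apply/negP => hG.
pose e := Num.min eps (G / (K + 1)).
have he : 0 < e by rewrite lt_min heps divr_gt0 //; lra.
have heG : e * (K + 1) <= G by rewrite -ler_pdivlMr ?ge_min ?lexx ?orbT //; lra.
have := hmin e; rewrite he ge_min lexx /= => /(_ isT); nra.
Qed.

Lemma sqr_sum_le (R : realFieldType) (I : finType) (a m b : I -> R) :
  (forall k, 0 <= a k) -> (forall k, 0 <= m k) -> (forall k, 0 <= b k) ->
  (forall k, a k ^+ 2 <= m k * b k) ->
  (\sum_k a k) ^+ 2 <= (\sum_k m k) * (\sum_k b k).
Proof.
move=> ha hm hb h.
have e1 : (\sum_k a k) ^+ 2 = \sum_k \sum_l a k * a l.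
  by rewrite expr2 mulr_suml; apply: eq_bigr => k _; rewrite mulr_sumr.
have e2 : (\sum_k m k) * (\sum_k b k) = \sum_k \sum_l m k * b l.
  by rewrite mulr_suml; apply: eq_bigr => k _; rewrite mulr_sumr.
have e3 : (\sum_k m k) * (\sum_k b k) = \sum_k \sum_l m l * b k.
  by rewrite e2 exchange_big.
suff : 2 * (\sum_k a k) ^+ 2 <= 2 * ((\sum_k m k) * (\sum_k b k)) by rewrite ler_pM2l.
have -> : 2 * ((\sum_k m k) * (\sum_k b k)) = \sum_k \sum_l (m k * b l + m l * b k).
  rewrite mulr_natl mulr2n {1}e2 e3 -big_split /=.
  by apply: eq_bigr => k _; rewrite -big_split.
rewrite e1 mulr_sumr; apply: ler_sum => k _; rewrite mulr_sumr; apply: ler_sum => l _.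
(* AM-GM: [(a k * a l) ^+ 2 <= (m k * b l) * (m l * b k)]. *)
have: (a k * a l) ^+ 2 <= m k * b l * (m l * b k).
  rewrite exprMn; have -> : m k * b l * (m l * b k) = (m k * b k) * (m l * b l) by ring.
  by apply: ler_pM; rewrite ?sqr_ge0 ?h.
have := mulr_ge0 (hm k) (hb l); have := mulr_ge0 (hm l) (hb k).
have := mulr_ge0 (ha k) (ha l); have := sqr_ge0 (m k * b l - m l * b k).
nra.
Qed.

Lemma sqr_sum_norm_le (R : realFieldType) (N : nat) (x : 'I_N -> R) :
  (\sum_i `|x i|) ^+ 2 <= N%:R * sqnorm x.
Proof.
have := sqr_sum_le (a := fun i => `|x i|) (m := fun=> 1) (b := fun i => x i ^+ 2).
rewrite sumr_const card_ord; apply=> i //; first exact: sqr_ge0.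
by rewrite mul1r real_normK ?num_real.
Qed.

Lemma le_div_of_sqr_bounds (R : realFieldType) (W Q E T n D : R) :
  0 <= W -> 0 <= Q -> 0 <= E -> 0 <= D ->
  W <= Q / 2 * E -> Q ^+ 2 <= 2 * T * W -> E ^+ 2 <= n * D ->
  2 / (n * T) * W <= D.
Proof.
(* If [n * T <= 0] the left side is [<= 0]; this covers the junk value [2 / 0 = 0]. *)
move=> hW hQ hE hD hWQE hQ2 hE2; case: (leP (n * T) 0) => hnT.
  have : 2 / (n * T) <= 0 by rewrite pmulr_rle0 // invr_le0.
  by move=> h; apply: le_trans hD; rewrite mulr_le0_ge0.
rewrite mulrAC ler_pdivrMr //; case: (eqVneq W 0) => [->|hW0]; first by nra.
have hW' : 0 < W by rewrite lt_neqAle eq_sym hW0.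
have hQE : (Q * E) ^+ 2 <= 2 * T * W * (n * D).
  by rewrite exprMn ler_pM ?sqr_ge0.
have hW2 : 4 * (W * W) <= (Q * E) ^+ 2.
  have : W * W <= (Q / 2 * E) * (Q / 2 * E) by rewrite ler_pM.
  by rewrite expr2; lra.
nra.
Qed.

Lemma sum_setU_setI (R : comRingType) (N : nat) (f : 'I_N -> R) A B :
  \sum_(i in A :|: B) f i + \sum_(i in A :&: B) f i
  = \sum_(i in A) f i + \sum_(i in B) f i.
Proof.
rewrite !(big_mkcond (fun i => i \in _)) -!big_split /=; apply: eq_bigr => i _.
by rewrite !inE; case: (i \in A); case: (i \in B) => /=; ring.
Qed.

Lemma base_nonincident (R : realFieldType) (N : nat) (F : {set 'I_N} -> R)
  (v : 'I_N -> R) i : F set0 = 0 -> in_base F v -> ~~ incident F i -> v i = 0.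
Proof.
move=> hF0 hv /existsPn hni.
have hF (S : {set 'I_N}) : i \notin S -> F (i |: S) = F S.
  by move=> hS; apply/eqP; have := hni S; rewrite hS /= negbK.
have hle : v i <= 0.
  by have := proj1 hv [set i]; rewrite big_set1 -[[set i]]setU0 hF ?inE // hF0.
have hge : 0 <= v i.
  have := proj1 hv (~: [set i]); rewrite -(hF (~: [set i])) ?setUCr ?inE ?eqxx //.
  rewrite -(proj2 hv) [X in _ <= X](bigD1 i) //= (eq_bigl (fun j => j != i)) => [|j].
    by rewrite lerDr.
  by rewrite !inE.
by apply/eqP; rewrite eq_le hle hge.
Qed.

Section TightSets.
Variables (R : realFieldType) (N : nat) (F : {set 'I_N} -> R) (u : 'I_N -> R).
Hypotheses (hsub : submodular F) (hF0 : F set0 = 0) (hu : in_base F u).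

Definition tight (S : {set 'I_N}) := \sum_(i in S) u i == F S.

Lemma tight_setU_setI A B : tight A -> tight B -> tight (A :|: B) && tight (A :&: B).
Proof.
move=> /eqP hA /eqP hB; have := hsub A B; have := sum_setU_setI u A B.
have := proj1 hu (A :|: B); have := proj1 hu (A :&: B).
by move=> hI hU e hs; rewrite /tight !eq_le hI hU /=; apply/andP; split; lra.
Qed.

Lemma tight_bigcup (I : finType) (P : pred I) (T : I -> {set 'I_N}) :
  (forall i, P i -> tight (T i)) -> tight (\bigcup_(i | P i) T i).
Proof.
move=> h; apply: (big_ind tight) => //; first by rewrite /tight big_set0 hF0.
by move=> A B hA hB; case/andP: (tight_setU_setI hA hB).
Qed.

Lemma tight_bigcap (I : finType) (P : pred I) (T : I -> {set 'I_N}) :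
  (forall i, P i -> tight (T i)) -> tight (\bigcap_(i | P i) T i).
Proof.
move=> h; apply: (big_ind tight) => //.
  by rewrite /tight -(proj2 hu); apply/eqP/eq_bigl => i; rewrite inE.
by move=> A B hA hB; case/andP: (tight_setU_setI hA hB).
Qed.

(* [u + e (chi_l - chi_k)] stays in the base polytope for small [e > 0]
   exactly when no tight set contains [l] but not [k]. *)
Definition exchangeable (l k : 'I_N) : bool :=
  [forall S : {set 'I_N}, (l \in S) && (k \notin S) ==> (\sum_(i in S) u i < F S)].

Lemma upper_level_tight (c : 'I_N -> R) t :
  (forall l k, exchangeable l k -> c l <= c k) -> tight [set i | t <= c i].
Proof.
move=> hc; set L := [set i | t <= c i].
have sep l k : l \in L -> k \notin L ->
    exists2 S, tight S & (l \in S) && (k \notin S).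
  move=> hl hk; have : ~~ exchangeable l k.
    apply/negP => /hc hlk; move: hl hk; rewrite !inE => hl.
    by rewrite (le_trans hl hlk).
  case/forallPn => S; rewrite negb_imply -leNgt => /andP [hS hF].
  by exists S => //; rewrite /tight eq_le hF (proj1 hu).
pose Sep l k := odflt setT [pick S | tight S && (l \in S) && (k \notin S)].
have hSep l k : l \in L -> k \notin L ->
    tight (Sep l k) && (l \in Sep l k) && (k \notin Sep l k).
  move=> hl hk; rewrite /Sep; case: pickP => [S -> //|none].
  by have [S hS hlk] := sep l k hl hk; have := none S; rewrite hS hlk.
have -> : L = \bigcup_(l in L) \bigcap_(k | k \notin L) Sep l k.
  apply/setP => i; apply/idP/bigcupP => [hi|[l hl /bigcapP hi]].
    by exists i => //; apply/bigcapP => k hk; case/andP: (hSep i k hi hk) => /andP [].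
  apply/negPn/negP => hni; have := hi i hni.
  by case/andP: (hSep l i hl hni) => _ /negPf ->.
apply: tight_bigcup => l hl; apply: tight_bigcap => k hk.
by case/andP: (hSep l k hl hk) => /andP [].
Qed.

Lemma exchange_potential_le0 (v : 'I_N -> R) (c : 'I_N -> R) :
  in_base F v -> (forall l k, exchangeable l k -> c l <= c k) ->
  \sum_i c i * (v i - u i) <= 0.
Proof.
move=> hv hc; apply: level_sum_le0 => [|t].
  by rewrite sumrB (proj2 hv) (proj2 hu) subrr.
set L := [set i | t <= c i].
have eL f : \sum_(i | t <= c i) f i = \sum_(i in L) f i.
  by apply: eq_bigl => i; rewrite inE.
by rewrite sumrB !eL (eqP (upper_level_tight t hc)) subr_le0 (proj1 hv).
Qed.

End TightSets.

Definition spread (R : realDomainType) (I : finType) (f : I -> R) : R :=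
  \big[Num.max/0]_(ab : I * I) Num.max `|f ab.2 - f ab.1| `|f ab.1|.

Section Spread.
Variables (R : realFieldType) (I : finType) (f : I -> R).

Lemma spread_ge0 : 0 <= spread f.
Proof. exact: bigmax_ge_id. Qed.

Lemma spread_term a b : Num.max `|f b - f a| `|f a| <= spread f.
Proof. exact: (le_bigmax _ (fun ab => Num.max `|f ab.2 - f ab.1| `|f ab.1|) (a, b)). Qed.

Lemma spread_diff a b : `|f b - f a| <= spread f.
Proof. by apply: le_trans (spread_term a b); rewrite le_max lexx. Qed.

Lemma spread_abs a : `|f a| <= spread f.
Proof. by apply: le_trans (spread_term a a); rewrite le_max lexx orbT. Qed.

Lemma spread_sqr_le : spread f ^+ 2 <= 2 * \sum_i f i ^+ 2.
Proof.
have sum_ge0 : 0 <= \sum_j f j ^+ 2 by apply: sumr_ge0 => j _; exact: sqr_ge0.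
have sqr_le i : f i ^+ 2 <= 2 * \sum_j f j ^+ 2.
  suff : f i ^+ 2 <= \sum_j f j ^+ 2 by lra.
  by rewrite (bigD1 i) //= lerDl sumr_ge0 // => j _; exact: sqr_ge0.
rewrite /spread; case: (bigmax_id_or_attained xpredT
  (fun ab : I * I => Num.max `|f ab.2 - f ab.1| `|f ab.1|) 0) => [->|[[a b] _ ->]] /=.
  by rewrite expr0n /= mulr_ge0.
have [->|->] : Num.max `|f b - f a| `|f a| = `|f b - f a| \/
    Num.max `|f b - f a| `|f a| = `|f a|.
- by case: (leP `|f a| `|f b - f a|) => _; [left | right].
- rewrite real_normK ?num_real //.
  have [->|hab] := eqVneq a b; first by rewrite subrr expr0n /= mulr_ge0.
  have hsum : f a ^+ 2 + f b ^+ 2 <= \sum_j f j ^+ 2.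
    rewrite (bigD1 a) //= (bigD1 b) 1?eq_sym //= addrA lerDl.
    by apply: sumr_ge0 => j _; exact: sqr_ge0.
  have := sqr_ge0 (f a + f b); nra.
- by rewrite real_normK ?num_real // sqr_le.
Qed.

End Spread.

Section Walks.
Variables (R : realFieldType) (N Rn : nat) (F : 'I_Rn -> {set 'I_N} -> R).
Hypotheses (hsub : forall r, submodular (F r)) (hF0 : forall r, F r set0 = 0).
Variables (theta y u : 'I_Rn -> 'I_N -> R).
Hypotheses (hy : in_Bprod F y) (hu : in_Bprod F u) (htheta : forall r i, 0 <= theta r i).
Hypothesis hopt : forall xi, in_Bprod F xi -> Aop xi = Aop u ->
  sqnorm_theta theta (fun r i => u r i - y r i) <=
  sqnorm_theta theta (fun r i => xi r i - y r i).

(* Minus the gradient at [u] of [1/2 ||. - y||^2_theta]. *)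
Definition ngrad r i := theta r i * (y r i - u r i).
Definition gain r l k := ngrad r l - ngrad r k.

Definition edge_dir (r : 'I_Rn) (l k : 'I_N) (r' : 'I_Rn) (i : 'I_N) : R :=
  if r' == r then (i == l)%:R - (i == k)%:R else 0.

(* A walk from [x] is a list of steps [(r, k)], each moving from the current node
   [l] to [k] along an exchangeable pair of block [r]; its direction raises
   [u r] at [l] and lowers it at [k]. *)
Fixpoint walk_ok (x : 'I_N) (p : seq ('I_Rn * 'I_N)) : bool :=
  if p is (r, k) :: p' then exchangeable (F r) (u r) x k && walk_ok k p' else true.
Fixpoint walk_gain (x : 'I_N) (p : seq ('I_Rn * 'I_N)) : R :=
  if p is (r, k) :: p' then gain r x k + walk_gain k p' else 0.
Definition walk_end (x : 'I_N) (p : seq ('I_Rn * 'I_N)) := last x (map snd p).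
Fixpoint walk_dir (x : 'I_N) (p : seq ('I_Rn * 'I_N)) : 'I_Rn -> 'I_N -> R :=
  if p is (r, k) :: p' then fun r' i => edge_dir r x k r' i + walk_dir k p' r' i
  else fun _ _ => 0.

Lemma walk_dir_sum_blocks x p i :
  \sum_r walk_dir x p r i = (i == x)%:R - (i == walk_end x p)%:R.
Proof.
elim: p x => [|[r k] p IH] x /=; first by rewrite big1 ?subrr.
rewrite big_split /= IH /edge_dir -big_mkcond /= big_pred1_eq /walk_end /=; ring.
Qed.

Lemma walk_dir_sum_nodes x p r : \sum_i walk_dir x p r i = 0.
Proof.
elim: p x => [|[r0 k] p IH] x /=; first by rewrite big1.
rewrite big_split /= IH addr0 /edge_dir; case: eqP => _; last by rewrite big1.
by rewrite sumrB !sum_delta subrr.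
Qed.

Lemma edge_dir_ngrad r0 l k :
  \sum_r \sum_i ngrad r i * edge_dir r0 l k r i = gain r0 l k.
Proof.
rewrite (bigD1 r0) //= [X in _ + X]big1 ?addr0 => [|r /negPf hr]; last first.
  by rewrite big1 // => i _; rewrite /edge_dir hr mulr0.
by rewrite /edge_dir eqxx; under eq_bigr do rewrite mulrBr; rewrite sumrB !sum_mul_delta.
Qed.

Lemma walk_dir_ngrad x p :
  \sum_r \sum_i ngrad r i * walk_dir x p r i = walk_gain x p.
Proof.
elim: p x => [|[r0 k] p IH] x /=.
  by rewrite big1 // => r _; rewrite big1 // => i _; rewrite mulr0.
rewrite -IH -edge_dir_ngrad -big_split /=; apply: eq_bigr => r _.
by rewrite -big_split /=; apply: eq_bigr => i _; rewrite mulrDr.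
Qed.

Lemma walk_dir_slack x p : walk_ok x p -> forall r (S : {set 'I_N}),
  0 < \sum_(i in S) walk_dir x p r i -> \sum_(i in S) u r i < F r S.
Proof.
elim: p x => [|[r0 k] p IH] x /=; first by move=> _ r S; rewrite big1 // ltxx.
move=> /andP [hxk hp] r S; rewrite big_split /= /edge_dir.
case: (r =P r0) => [->|_]; last by rewrite big1 // add0r; exact: IH.
rewrite sumrB !sum_delta.
case hx: (x \in S); case hk: (k \in S) => /=; rewrite ?subrr ?add0r; try exact: IH.
- by move=> _; move/forallP: hxk => /(_ S); rewrite hx hk.
- by move=> h; apply: (IH k) => //; lra.
Qed.

Lemma walk_perturb_feasible x p : walk_ok x p ->
  exists2 eps, 0 < eps & forall e, 0 < e <= eps ->
    in_Bprod F (fun r i => u r i + e * walk_dir x p r i).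
Proof.
move=> hp; pose D r (S : {set 'I_N}) := \sum_(i in S) walk_dir x p r i.
pose slack r S := F r S - \sum_(i in S) u r i.
pose P (q : 'I_Rn * {set 'I_N}) := 0 < D q.1 q.2.
exists (\big[Num.min/1]_(q | P q) (slack q.1 q.2 / D q.1 q.2)).
  apply/bigmin_gtP; split => // [[r S]] /= hD.
  by rewrite divr_gt0 // subr_gt0; exact: walk_dir_slack hD.
move=> e /andP [he heps] r; split => [S|]; last first.
  by rewrite big_split /= -mulr_sumr walk_dir_sum_nodes mulr0 addr0 (proj2 (hu r)).
rewrite big_split /= -mulr_sumr -/(D r S); have := proj1 (hu r) S.
case: (ltP 0 (D r S)) => hD hS.
  have := le_trans heps (bigmin_le_cond 1 (fun q => slack q.1 q.2 / D q.1 q.2)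
    (hD : P (r, S))).
  by rewrite /= ler_pdivlMr // /slack; lra.
have : e * D r S <= 0 by apply: mulr_ge0_le0; lra.
lra.
Qed.

Lemma closed_walk_gain_le0 x p : walk_ok x p -> walk_end x p = x -> walk_gain x p <= 0.
Proof.
move=> hp hx; have [eps heps hfeas] := walk_perturb_feasible hp.
set D := walk_dir x p; set G := walk_gain x p.
pose K := \sum_r \sum_i theta r i * D r i ^+ 2.
apply: (slope_le0_of_local_min (K := K) heps) => [|e he].
  by apply: sumr_ge0 => r _; apply: sumr_ge0 => i _; rewrite mulr_ge0 ?sqr_ge0.
have hA : Aop (fun r i => u r i + e * D r i) = Aop u.
  apply: functional_extensionality => i.
  by rewrite /Aop big_split /= -mulr_sumr walk_dir_sum_blocks hx subrr mulr0 addr0.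
have hJ : sqnorm_theta theta (fun r i => u r i + e * D r i - y r i) =
    sqnorm_theta theta (fun r i => u r i - y r i) - 2 * e * G + e ^+ 2 * K.
  rewrite /G -walk_dir_ngrad /sqnorm_theta /K !mulr_sumr -sumrB -big_split /=.
  apply: eq_bigr => r _; rewrite !mulr_sumr -sumrB -big_split /=.
  by apply: eq_bigr => i _; rewrite /ngrad -/D; ring.
have := hopt (hfeas e he) hA; rewrite hJ; case/andP: he => he _ hmin.
by rewrite -(ler_pM2l he); move: hmin; rewrite expr2; lra.
Qed.

Lemma walk_ok_cat x p1 p2 :
  walk_ok x (p1 ++ p2) = walk_ok x p1 && walk_ok (walk_end x p1) p2.
Proof. by elim: p1 x => [|[r k] p IH] x //=; rewrite IH andbA. Qed.

Lemma walk_gain_cat x p1 p2 :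
  walk_gain x (p1 ++ p2) = walk_gain x p1 + walk_gain (walk_end x p1) p2.
Proof. by elim: p1 x => [|[r k] p IH] x /=; rewrite ?add0r // IH addrA. Qed.

Lemma walk_end_cat x p1 p2 : walk_end x (p1 ++ p2) = walk_end (walk_end x p1) p2.
Proof. by rewrite /walk_end map_cat last_cat. Qed.

Lemma walk_end_rcons x p r k : walk_end x (rcons p (r, k)) = k.
Proof. by rewrite /walk_end map_rcons last_rcons. Qed.

Lemma walk_end_take x p i : (i <= size p)%N ->
  walk_end x (take i p) = nth x (x :: map snd p) i.
Proof.
move=> hi; rewrite /walk_end map_take (last_nth x) size_takel ?size_map //.
by rewrite -[x :: take _ _]/(take i.+1 (x :: _)) nth_take.
Qed.

(* Cutting out closed sub-walks, whose gain is nonpositive, never decreases the gain. *)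
Lemma walk_uniq_shortcut x p : walk_ok x p ->
  exists p', [/\ uniq (x :: map snd p'), walk_ok x p', walk_end x p' = walk_end x p
     & walk_gain x p <= walk_gain x p'].
Proof.
elim/last_ind: p => [|p [r k] IH] hp; first by exists [::].
move: hp; rewrite -cats1 walk_ok_cat => /andP [/IH [p' [hu' hp' he hg]]].
rewrite walk_end_cat walk_gain_cat -he => hk.
set s := x :: map snd p'.
case hks: (k \in s); last first.
  exists (rcons p' (r, k)); rewrite -cats1 walk_ok_cat walk_gain_cat walk_end_cat.
  by rewrite map_cat -cat_cons cat_uniq hu' hp' hk /= hks lerD2r.
pose i := index k s.
have hi : (i <= size p')%N by rewrite -ltnS -(size_map snd) -/(size s) index_mem.
have hend : walk_end x (take i p') = k by rewrite walk_end_take // nth_index.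
have : walk_ok x (take i p' ++ drop i p') by rewrite cat_take_drop.
rewrite walk_ok_cat hend => /andP [hp1 hp2].
have hsplit : walk_gain x p' + walk_gain (walk_end x p') [:: (r, k)] =
    walk_gain x (take i p') + walk_gain (walk_end x (take i p')) (drop i p' ++ [:: (r, k)]).
  by rewrite -!walk_gain_cat catA cat_take_drop.
exists (take i p'); split => //.
- by rewrite map_take -[x :: _]/(take i.+1 s) take_uniq.
- apply: le_trans (_ : walk_gain x p' + walk_gain (walk_end x p') [:: (r, k)] <= _).
    by rewrite lerD2r.
  rewrite hsplit hend gerDl; apply: closed_walk_gain_le0; last by rewrite walk_end_cat.
  by rewrite walk_ok_cat hp2 -[k in walk_end k _]hend -walk_end_cat cat_take_drop.
Qed.

Lemma uniq_walk_size (x : 'I_N) (p : seq ('I_Rn * 'I_N)) :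
  uniq (x :: map snd p) -> (size p < N)%N.
Proof.
move=> hp; have := max_card (mem (x :: map snd p)).
by rewrite (card_uniqP hp) /= size_map card_ord.
Qed.

(* [longest t k] is the largest gain of a walk of length at most [t] ending at [k]
   (Bellman-Ford). *)
Fixpoint longest (t : nat) : 'I_N -> R :=
  if t is t'.+1 then fun k =>
    \big[Num.max/longest t' k]_(e : 'I_Rn * 'I_N | exchangeable (F e.1) (u e.1) e.2 k)
      (longest t' e.2 + gain e.1 e.2 k)
  else fun=> 0.

Lemma longest_ge0 t k : 0 <= longest t k.
Proof. by elim: t k => [|t IH] k //=; exact: le_trans (IH k) (bigmax_ge_id _ _ _ _). Qed.

Lemma longest_attained t k : exists x p,
  [/\ walk_ok x p, walk_end x p = k, (size p <= t)%N & walk_gain x p = longest t k].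
Proof.
elim: t k => [|t IH] k; first by exists k, [::].
case: (bigmax_id_or_attained (fun e : 'I_Rn * 'I_N => exchangeable (F e.1) (u e.1) e.2 k)
   (fun e => longest t e.2 + gain e.1 e.2 k) (longest t k)) => /= [->|[[r l] /= hlk ->]].
  by have [x [p [? ? hs ?]]] := IH k; exists x, p; split => //; exact: leqW.
have [x [p [hp hl hs hg]]] := IH l; exists x, (rcons p (r, k)).
rewrite -cats1 walk_ok_cat walk_gain_cat walk_end_cat size_cat addn1 hl /= hlk.
by rewrite hp hg addr0.
Qed.

Lemma longest_ub t x p : walk_ok x p -> (size p <= t)%N ->
  walk_gain x p <= longest t (walk_end x p).
Proof.
elim: t x p => [|t IH] x p hp hs; first by move: hs; rewrite leqn0 => /nilP ->.
case/lastP: p hp hs => [|p [r k]] hp hs; first exact: longest_ge0.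
move: hp hs; rewrite walk_end_rcons -cats1 walk_ok_cat walk_gain_cat size_cat addn1 ltnS /=.
case/andP => hp /andP [hk _] hs; rewrite addr0.
pose P (e : 'I_Rn * 'I_N) := exchangeable (F e.1) (u e.1) e.2 k.
apply: le_trans (le_bigmax_cond _ (fun e => longest t e.2 + gain e.1 e.2 k)
  (hk : P (r, walk_end x p))).
by rewrite /= lerD2r IH.
Qed.

(* Closed walks having nonpositive gain, longest walks can be taken simple,
   hence of length less than [N]. *)
Definition potential := longest N.

Lemma potential_ge0 k : 0 <= potential k.
Proof. exact: longest_ge0. Qed.

Lemma potential_exchange r l k : exchangeable (F r) (u r) l k ->
  potential l + gain r l k <= potential k.
Proof.
move=> hlk; have [x [p [hp hl _ hg]]] := longest_attained N l.
have : walk_ok x (rcons p (r, k)) by rewrite -cats1 walk_ok_cat hp hl /= hlk.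
case/walk_uniq_shortcut => p' [hu' hp' he hg'].
have := longest_ub hp' (ltnW (uniq_walk_size hu')).
rewrite he walk_end_rcons -cats1 walk_gain_cat hg hl /= addr0 in hg' *.
by move=> h; exact: le_trans hg' h.
Qed.

Let H k := spread (fun r => ngrad r k).

(* The gain of a walk telescopes into one difference [ngrad r' k - ngrad r k]
   per visited node, plus [ngrad] at both ends; [c] carries the [- ngrad r x]
   left by the step entering [x]. *)
Lemma uniq_walk_gain_le p x c : uniq (x :: map snd p) ->
  (forall b, `|c + ngrad b x| <= H x) -> `|c| <= H x ->
  c + walk_gain x p <= \sum_(k <- x :: map snd p) H k.
Proof.
elim: p x c => [|[r k] p IH] x c hp hb hc /=.
  by rewrite big_seq1 addr0; exact: le_trans (ler_norm c) hc.
rewrite big_cons; move: hp; rewrite cons_uniq => /andP [_ hp].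
have hx : c + ngrad r x <= H x by exact: le_trans (ler_norm _) (hb r).
have hk : - ngrad r k + walk_gain k p <= \sum_(j <- k :: map snd p) H j.
  apply: IH => // [b|]; last by rewrite normrN; exact: (spread_abs (fun r => ngrad r k)).
  by rewrite addrC; exact: (spread_diff (fun r => ngrad r k)).
by rewrite /gain; lra.
Qed.

Lemma potential_le_sum_spread k : potential k <= \sum_j H j.
Proof.
rewrite /potential; have [x [p [hp _ _ <-]]] := longest_attained N k.
have [p' [hu' _ _ hg]] := walk_uniq_shortcut hp.
apply: le_trans hg _; rewrite -[walk_gain x p']add0r.
apply: le_trans (uniq_walk_gain_le hu' _ _) _.
- by move=> b; rewrite add0r; exact: (spread_abs (fun r => ngrad r x)).
- by rewrite normr0; exact: spread_ge0.
rewrite (big_uniq _ hu') big_mkcond /=; apply: ler_sum => i _.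
by case: ifP => // _; exact: spread_ge0.
Qed.

Lemma sqnorm_theta_add_potential_le0 :
  sqnorm_theta theta (fun r i => y r i - u r i) +
  \sum_i potential i * (Aop y i - Aop u i) <= 0.
Proof.
have -> : \sum_i potential i * (Aop y i - Aop u i) =
    \sum_r \sum_i potential i * (y r i - u r i).
  rewrite exchange_big /=; apply: eq_bigr => i _.
  by rewrite /Aop -sumrB mulr_sumr.
rewrite /sqnorm_theta -big_split /=; apply: sumr_le0 => r _.
rewrite -big_split /=.
rewrite (eq_bigr (fun i => (ngrad r i + potential i) * (y r i - u r i))) => [|i _].
  apply: exchange_potential_le0 => // l k /(potential_exchange (r := r)).
  by rewrite /gain; lra.
by rewrite /ngrad; ring.
Qed.

Lemma sqnorm_theta_le_spread :
  sqnorm_theta theta (fun r i => y r i - u r i) <=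
  (\sum_k H k) / 2 * \sum_i `|Aop y i - Aop u i|.
Proof.
set Q := \sum_k H k; set d := fun i => Aop y i - Aop u i.
have hd0 : \sum_i d i = 0.
  rewrite /d /Aop sumrB exchange_big [X in _ - X]exchange_big /= -sumrB.
  by apply: big1 => r _; rewrite (proj2 (hy r)) (proj2 (hu r)) subrr.
apply: le_trans (_ : \sum_i (Q / 2 - potential i) * d i <= _).
  rewrite (eq_bigr (fun i => Q / 2 * d i - potential i * d i)) => [|i _]; last first.
    by rewrite mulrBl.
  rewrite sumrB -mulr_sumr hd0 mulr0 sub0r; have := sqnorm_theta_add_potential_le0.
  by rewrite -/d; lra.
rewrite mulr_sumr; apply: ler_sum => i _.
apply: le_trans (ler_norm _) _; rewrite normrM ler_wpM2r //.
have := potential_ge0 i; have := potential_le_sum_spread i.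
by rewrite -/Q ler_norml; lra.
Qed.

End Walks.

Lemma thetaP_ge0 (R : realFieldType) (N Rn : nat) (F : 'I_Rn -> {set 'I_N} -> R)
    (P : {set 'I_Rn} -> R) r i :
  distribution P -> 0 <= thetaP F P r i.
Proof.
move=> [hP0 _]; rewrite /thetaP divr_ge0 ?sumr_ge0 // => C _.
by rewrite mulr_ge0 ?ler0n.
Qed.

Section SpreadBound.
Variables (R : realFieldType) (N Rn : nat) (F : 'I_Rn -> {set 'I_N} -> R).
Variables (theta y u : 'I_Rn -> 'I_N -> R).
Hypotheses (hF0 : forall r, F r set0 = 0) (hy : in_Bprod F y) (hu : in_Bprod F u).
Hypothesis htheta : forall r i, 0 <= theta r i.

Lemma sum_ngrad_sqr_le k :
  \sum_r ngrad theta y u r k ^+ 2 <=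
  (\big[Num.max/0]_(r | incident (F r) k) theta r k) *
  \sum_r theta r k * (y r k - u r k) ^+ 2.
Proof.
rewrite mulr_sumr; apply: ler_sum => r _; rewrite /ngrad exprMn expr2 -mulrA.
have [hk|hk] := boolP (incident (F r) k).
  apply: ler_wpM2r; first by rewrite mulr_ge0 ?sqr_ge0.
  exact: (le_bigmax_cond _ (fun r => theta r k) hk).
rewrite (base_nonincident (hF0 r) (hy r) hk) (base_nonincident (hF0 r) (hu r) hk).
by rewrite subrr expr0n /= !mulr0.
Qed.

Lemma sqr_sum_spread_le :
  (\sum_k spread (fun r => ngrad theta y u r k)) ^+ 2 <=
  2 * norm1inf F theta * sqnorm_theta theta (fun r i => y r i - u r i).
Proof.
rewrite /norm1inf [2 * _]mulr_sumr /sqnorm_theta exchange_big /=.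
apply: sqr_sum_le => k; first exact: spread_ge0.
- by rewrite mulr_ge0 ?bigmax_ge_id.
- by apply: sumr_ge0 => r _; rewrite mulr_ge0 ?sqr_ge0.
- apply: le_trans (spread_sqr_le _) _; rewrite -mulrA ler_wpM2l //.
  exact: sum_ngrad_sqr_le.
Qed.

End SpreadBound.

Unset Implicit Arguments.
Set Strict Implicit.

Theorem lemma3p9 (R : realFieldType) (N Rn : nat)
  (F : 'I_Rn -> {set 'I_N} -> R)
  (hN : (0 < N)%N) (hR : (0 < Rn)%N)
  (hsub : forall r, submodular (F r))
  (hF0 : forall r, F r set0 = 0)
  (hcover : forall i : 'I_N, exists r, incident (F r) i)
  (xstar : 'I_N -> R)
  (hxstar : exists2 fx : 'I_Rn -> R,
      (forall r, lovasz_val (F r) xstar (fx r)) &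
      forall (x : 'I_N -> R) (fy : 'I_Rn -> R),
        (forall r, lovasz_val (F r) x (fy r)) ->
        \sum_(r < Rn) fx r + sqnorm xstar / 2 <=
        \sum_(r < Rn) fy r + sqnorm x / 2)
  (alpha : R) (P : {set 'I_Rn} -> R) (hP : proper_dist alpha P)
  (y ystar : 'I_Rn -> 'I_N -> R)
  (hy : in_Bprod F y)
  (hystarXi : in_Bprod F ystar /\ Aop ystar = (fun i => - xstar i))
  (hystar_min : forall xi : 'I_Rn -> 'I_N -> R,
      in_Bprod F xi -> Aop xi = (fun i => - xstar i) ->
      sqnorm_theta (thetaP F P) (fun r i => ystar r i - y r i) <=
      sqnorm_theta (thetaP F P) (fun r i => xi r i - y r i)) :
  sqnorm (fun i => Aop y i - Aop ystar i) >=
    2 / (N%:R * norm1inf F (thetaP F P)) *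
    sqnorm_theta (thetaP F P) (fun r i => y r i - ystar r i).
Proof.
have [hu hAu] := hystarXi; have [hPdist _] := hP.
have hth r i : 0 <= thetaP F P r i by exact: thetaP_ge0.
have hopt xi : in_Bprod F xi -> Aop xi = Aop ystar ->
    sqnorm_theta (thetaP F P) (fun r i => ystar r i - y r i) <=
    sqnorm_theta (thetaP F P) (fun r i => xi r i - y r i).
  by move=> hxi e; apply: hystar_min; rewrite ?e.
apply: le_div_of_sqr_bounds (sqnorm_theta_le_spread hsub hF0 hy hu hth hopt)
  (sqr_sum_spread_le hF0 hy hu hth) (sqr_sum_norm_le _).
- by apply: sumr_ge0 => r _; apply: sumr_ge0 => i _; rewrite mulr_ge0 ?sqr_ge0.
- by apply: sumr_ge0 => k _; exact: spread_ge0.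
- by apply: sumr_ge0 => i _.
- by apply: sumr_ge0 => i _; exact: sqr_ge0.
Qed.
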